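(* Consider $N$ users indexed by $\mathcal{U}=\{1,\dots,N\}$ with fixed channel power gains $h_1,\dots,h_N>0$, noise variance $\eta>0$, target throughputs $\theta_1,\dots,\theta_N>0$, and strategy sets $\mathcal{P}^i=[0,P_i^{max}]$ with $P_i^{max}>0$. For $\mathbf{P}\in\prod_i\mathcal{P}^i$ let $r_i(\mathbf{P})=\log_2\!\big(1+\frac{h_iP_i}{\eta+\sum_{j\neq i}h_jP_j}\big)$, and suppose the set $\mathcal{S}$ of profiles with $r_i(\mathbf{P})\ge\theta_i$ for all $i$ is non-empty. Let $\mathbf{P}^+$ be the efficient satisfaction equilibrium, i.e. the minimizer of $\sum_iP_i$ over $\mathcal{S}$. If for users $i,j$ we have $\theta_i\le\theta_j$, then $P_i^+h_i\le P_j^+h_j$. *)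

From HB Require Import structures.
From mathcomp Require Import all_boot all_order all_algebra.
From mathcomp Require Import all_classical all_reals all_analysis.
Set Implicit Arguments. Unset Strict Implicit. Unset Printing Implicit Defensive.
Import Order.TTheory GRing.Theory Num.Theory.
Local Open Scope ring_scope.

(* Users are indexed by 'I_N (i.e. {0,...,N-1}, standing for {1,...,N}). *)

Definition log2 (R : realType) (x : R) : R := ln x / ln 2.

Definition rate (R : realType) (N : nat) (h : 'I_N -> R) (eta : R)
  (P : 'I_N -> R) (i : 'I_N) : R :=
  log2 (1 + h i * P i / (eta + \sum_(j < N | j != i) h j * P j)).

Definition satisfying (R : realType) (N : nat) (h : 'I_N -> R) (eta : R)
  (theta Pmax : 'I_N -> R) (P : 'I_N -> R) : Prop :=
  (forall i, 0 <= P i <= Pmax i) /\ (forall i, theta i <= rate h eta P i).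

Definition efficient_SE (R : realType) (N : nat) (h : 'I_N -> R) (eta : R)
  (theta Pmax : 'I_N -> R) (Pp : 'I_N -> R) : Prop :=
  satisfying h eta theta Pmax Pp /\
  (forall P, satisfying h eta theta Pmax P -> \sum_(k < N) Pp k <= \sum_(k < N) P k).

From mathcomp Require Import all_boot all_order all_algebra.
From mathcomp Require Import all_classical all_reals all_analysis.
Import Order.TTheory GRing.Theory Num.Theory.
Set Implicit Arguments.
Unset Strict Implicit.
Unset Printing Implicit Defensive.

Local Open Scope ring_scope.

(* If h_j P_j < h_i P_i at a satisfying profile, lower user i's received
   power h_i P_i to h_j P_j.  User i then sees the interference that user j
   used to see minus the surplus h_i P_i - h_j P_j, so its SINR is at least
   user j's old SINR and it still meets theta_i <= theta_j; every other user
   sees less interference.  The new profile is satisfying and uses strictly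
   less total power, so P^+ cannot be efficient. *)

Lemma ler_log2 (R : realType) (x y : R) : 0 < x -> x <= y -> log2 x <= log2 y.
Proof.
move=> x_gt0 le_xy; rewrite /log2; apply: ler_wpM2r.
  by rewrite invr_ge0 ltW // ln_gt0 // ltr1n.
by rewrite ler_ln // posrE (lt_le_trans x_gt0).
Qed.

Lemma ler_log2_1pD (R : realType) (a a' d d' : R) :
  0 <= a -> a <= a' -> 0 < d' -> d' <= d ->
  log2 (1 + a / d) <= log2 (1 + a' / d').
Proof.
move=> a_ge0 le_aa' d'_gt0 le_d'd; have d_gt0 := lt_le_trans d'_gt0 le_d'd.
apply: ler_log2; first by rewrite ltr_pwDl // divr_ge0 // ltW.
rewrite lerD2l; apply: (@le_trans _ _ (a / d')).
  by apply: ler_wpM2l => //; rewrite lef_pV2.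
by apply: ler_wpM2r => //; rewrite invr_ge0 ltW.
Qed.

Section PowerControl.

Variables (R : realType) (N : nat) (h : 'I_N -> R) (eta : R).
Hypotheses (h_gt0 : forall k, 0 < h k) (eta_gt0 : 0 < eta).

Definition interference (P : 'I_N -> R) (k : 'I_N) : R :=
  eta + \sum_(l < N | l != k) h l * P l.

Definition set_power (P : 'I_N -> R) (i : 'I_N) (p : R) : 'I_N -> R :=
  fun k => if k == i then p else P k.

Lemma rateE P k : rate h eta P k = log2 (1 + h k * P k / interference P k).
Proof. by []. Qed.

Lemma interference_gt0 P k : (forall l, 0 <= P l) -> 0 < interference P k.
Proof.
move=> P_ge0; apply: (lt_le_trans eta_gt0); rewrite /interference lerDl.
by apply: sumr_ge0 => l _; exact: mulr_ge0 (ltW (h_gt0 l)) (P_ge0 l).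
Qed.

Lemma interferenceE P k :
  interference P k = eta + \sum_(l < N) h l * P l - h k * P k.
Proof.
by rewrite /interference [\sum_(l < N) _](bigD1 k) //= addrA addrAC addrK.
Qed.

Lemma ler_interference P k k' :
  h k' * P k' <= h k * P k -> interference P k <= interference P k'.
Proof. by move=> le_hP; rewrite !interferenceE lerB. Qed.

Lemma le_interference P Q k :
  (forall l, Q l <= P l) -> interference Q k <= interference P k.
Proof.
by move=> le_set_power; rewrite lerD2l; apply: ler_sum => l _; rewrite ler_pM2l.
Qed.

Lemma set_powerE P i p k : set_power P i p k = if k == i then p else P k.
Proof. by []. Qed.

Lemma set_power_le P i p : p <= P i -> forall k, set_power P i p k <= P k.
Proof. by move=> le_p k; rewrite set_powerE; case: eqP => [->|]. Qed.

Lemma interference_set_power P i p :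
  interference (set_power P i p) i = interference P i.
Proof.
by congr (_ + _); apply: eq_bigr => l /negbTE l_neq_i; rewrite set_powerE l_neq_i.
Qed.

Lemma sum_set_power P i p :
  \sum_(k < N) set_power P i p k = \sum_(k < N) P k - P i + p.
Proof.
rewrite (bigD1 i) //= [\sum_(k < N) P k](bigD1 i) //= [P i + _]addrC addrK addrC.
rewrite set_powerE eqxx; congr (_ + _).
by apply: eq_bigr => k /negbTE k_neq_i; rewrite set_powerE k_neq_i.
Qed.

Lemma satisfying_match_power theta Pmax P i j :
  satisfying h eta theta Pmax P -> theta i <= theta j ->
  h j * P j <= h i * P i ->
  satisfying h eta theta Pmax (set_power P i (h j * P j / h i)).
Proof.
move=> [P_bnd P_rate] le_theta le_hP.
set p := h j * P j / h i.
have P_ge0 k : 0 <= P k by case/andP: (P_bnd k).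
have hP_ge0 k : 0 <= h k * P k := mulr_ge0 (ltW (h_gt0 k)) (P_ge0 k).
have hp : h i * p = h j * P j by rewrite mulrC divfK ?gt_eqF.
have p_ge0 : 0 <= p := divr_ge0 (hP_ge0 j) (ltW (h_gt0 i)).
have le_p : p <= P i by rewrite -(ler_pM2l (h_gt0 i)) hp.
have le_set_power := set_power_le le_p.
have Q_ge0 k : 0 <= set_power P i p k by rewrite set_powerE; case: eqP.
split=> k.
  by rewrite Q_ge0 (le_trans (le_set_power k)) //; case/andP: (P_bnd k).
have [->|k_neq_i] := eqVneq k i.
  apply: (le_trans le_theta); apply: (le_trans (P_rate j)).
  rewrite !rateE interference_set_power set_powerE eqxx hp.
  apply: ler_log2_1pD; rewrite ?interference_gt0 //.
  exact: ler_interference.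
apply: (le_trans (P_rate k)); rewrite !rateE set_powerE (negbTE k_neq_i).
apply: ler_log2_1pD; rewrite ?interference_gt0 //.
exact: le_interference.
Qed.

End PowerControl.

Theorem proposition3 (R : realType) (N : nat) (h : 'I_N -> R) (eta : R)
  (theta Pmax : 'I_N -> R)
  (hpos : forall i, 0 < h i) (etapos : 0 < eta)
  (thetapos : forall i, 0 < theta i) (Pmaxpos : forall i, 0 < Pmax i)
  (Snonempty : exists P, satisfying h eta theta Pmax P)
  (Pp : 'I_N -> R) (hPp : efficient_SE h eta theta Pmax Pp)
  (i j : 'I_N) (hij : theta i <= theta j) :
  Pp i * h i <= Pp j * h j.
Proof.
case: hPp => Pp_sat Pp_min; rewrite leNgt; apply/negP => lt_hP.
rewrite ![Pp _ * _]mulrC in lt_hP.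
have Q_sat := satisfying_match_power hpos etapos Pp_sat hij (ltW lt_hP).
have := Pp_min _ Q_sat.
rewrite sum_set_power -addrA lerDl addrC subr_ge0 leNgt.
by rewrite (ltr_pdivrMr _ _ (hpos i)) [Pp i * _]mulrC lt_hP.
Qed.
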